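(* Let $\Gamma$ be a graph and let $K_1,\dots,K_n$ be finitely many finite graphs. (1) If $\Gamma$ contains a finite set of vertices $X$ such that every subgraph of $\Gamma$ isomorphic to one of the $K_i$ has at least one vertex in $X$, then $\Gamma$ contains a finite set of vertices $Y$, invariant under all automorphisms of $\Gamma$, such that every subgraph of $\Gamma$ isomorphic to one of the $K_i$ has at least one vertex in $Y$, and $|Y|\le |X|\cdot\max_i(\text{number of vertices of }K_i)$. (2) If $\Gamma$ contains a finite set of edges $X$ such that every subgraph of $\Gamma$ isomorphic to one of the $K_i$ has at least one edge in $X$, then $\Gamma$ contains a finite set of edges $Y$, invariant under all automorphisms of $\Gamma$, such that every subgraph of $\Gamma$ isomorphic to one of the $K_i$ has at least one edge in $Y$, and $|Y|\le |X|\cdot\max_i(\text{number of edges of }K_i)$.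
   Context: ''Graph'' may be understood in any of the usual senses (directed, undirected, or mixed; multiple edges and/or loops allowed or not), fixed throughout; isomorphisms and automorphisms preserve the corresponding structure. ''Subgraph'' means an arbitrary (not necessarily induced) subgraph. $\Gamma$ may be infinite. *)

From Stdlib Require List.
From mathcomp Require Import all_boot.

Set Implicit Arguments. Unset Strict Implicit. Unset Printing Implicit Defensive.

(* Convention: a graph is a directed multigraph with loops allowed:
   a vertex type, an edge type, and source / target maps. *)
Record graph := Graph {
  gV : Type; gE : Type;
  gsrc : gE -> gV; gtgt : gE -> gV }.

Record fin_graph := FGraph {
  fV : finType; fE : finType;
  fsrc : fE -> fV; ftgt : fE -> fV }.

(* (VS, ES) is a (not necessarily induced) subgraph of G. *)
Definition is_subgraph (G : graph) (VS : gV G -> Prop) (ES : gE G -> Prop) :=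
  forall e, ES e -> VS (gsrc e) /\ VS (gtgt e).

Definition iso_to (G : graph) (VS : gV G -> Prop) (ES : gE G -> Prop)
    (K : fin_graph) :=
  exists (phi : fV K -> gV G) (psi : fE K -> gE G),
    injective phi /\ injective psi /\
    (forall v, VS v <-> exists x, phi x = v) /\
    (forall e, ES e <-> exists y, psi y = e) /\
    (forall y, gsrc (psi y) = phi (fsrc y) /\ gtgt (psi y) = phi (ftgt y)).

Definition automorphism (G : graph) (s : gV G -> gV G) (t : gE G -> gE G) :=
  bijective s /\ bijective t /\
  (forall e, gsrc (t e) = s (gsrc e) /\ gtgt (t e) = s (gtgt e)).

Definition vhits (G : graph) (Ks : list fin_graph) (X : list (gV G)) :=
  forall K VS ES, List.In K Ks -> is_subgraph VS ES -> iso_to VS ES K ->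
    exists v, VS v /\ List.In v X.

Definition ehits (G : graph) (Ks : list fin_graph) (X : list (gE G)) :=
  forall K VS ES, List.In K Ks -> is_subgraph VS ES -> iso_to VS ES K ->
    exists e, ES e /\ List.In e X.

Definition vinvariant (G : graph) (Y : list (gV G)) :=
  forall s t, automorphism s t -> forall v, List.In (s v) Y <-> List.In v Y.

Definition einvariant (G : graph) (Y : list (gE G)) :=
  forall s t, automorphism s t -> forall e, List.In (t e) Y <-> List.In e Y.

(* Call a finite set of vertices (edges) forced if it meets every finite hitting set of
   the copies of the K_i.  Every copy is forced, hence contains a minimal forced set of
   size at most d = max |K_i|, so whatever hits these small minimal forced sets hits
   every copy.  There are finitely many of them: a minimal forced set strictly containing
   A contains a point outside A of a finite hitting set that misses A, which bounds the
   branching of a search of depth d.  Automorphisms permute them, and each one meets X.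

   This leaves a finite problem: a family M of sets of size at most d, stable under a
   finite group G, all of whose members meet X.  Grow a list of members of M, each entry
   standing for its |G| translates, as long as no point lies in more than
   N = (|X| d + 1) |G| of the listed translates.  Counting through X bounds the number
   of translates by |X| N; when the growth stops, every member of M contains a point of
   load greater than N - |G|.  These heavy points form a G-invariant hitting set, and
   counting their load gives |heavy| (|X| d |G| + 1) <= d |X| N, i.e. |heavy| <= |X| d. *)

From Stdlib Require List.
From mathcomp Require Import all_boot fingroup perm action.
From mathcomp Require Import boolp zify.

Set Implicit Arguments. Unset Strict Implicit. Unset Printing Implicit Defensive.

(** * Invariant hitting sets for finite group actions *)

Lemma sum_mem_card (T : finType) (S B : {set T}) :
  \sum_(v in S) (v \in B) = #|S :&: B|.
Proof.
rewrite -sum1_card big_mkcond [RHS]big_mkcond /=; apply: eq_bigr => v _.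
by rewrite inE; case: (v \in S); case: (v \in B).
Qed.

Lemma mem_setact_act (aT : finGroupType) (D : {set aT}) (T : finType)
    (to : action D T) (S : {set T}) x a :
  (to x a \in to^* S a) = (x \in S).
Proof. by rewrite setactE; apply: (mem_imset (f := to^~ a)); apply: act_inj. Qed.

Lemma leq_of_mul_capacity h n g : h * (n * g).+1 <= n * (n.+1 * g) -> h <= n.
Proof. by nia. Qed.

Section InvariantHittingSet.

Variables (aT : finGroupType) (T : finType) (to : {action aT &-> T}).
Variables (G : {group aT}) (M : {set {set T}}) (X : {set T}) (d : nat).
Hypothesis M_stable : G \subset 'N(M | to^*)%g.
Hypothesis M_small : {in M, forall B : {set T}, #|B| <= d}.
Hypothesis M_meets_X : {in M, forall B : {set T}, X :&: B != set0}.

Definition incidence (F : {set T}) v := \sum_(a in G) (v \in to^* F a).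

Definition load (Fs : seq {set T}) v := \sum_(F <- Fs) incidence F v.

Lemma load_cons F Fs v : load (F :: Fs) v = incidence F v + load Fs v.
Proof. exact: big_cons. Qed.

Definition capacity := (#|X| * d).+1 * #|G|.
Local Notation N := capacity.

Definition packing Fs := all (mem M) Fs && [forall v, load Fs v <= N].

Definition maximal_packing Fs := packing Fs && [forall F in M, ~~ packing (F :: Fs)].

Lemma incidence_act F v a : a \in G -> incidence F (to v a) = incidence F v.
Proof.
move=> aG; rewrite /incidence (reindex_astabs 'R a) ?astabsR //=.
by apply: eq_bigr => b _; rewrite actM mem_setact_act.
Qed.

Lemma load_act Fs v a : a \in G -> load Fs (to v a) = load Fs v.
Proof. by move=> aG; apply: eq_bigr => F _; apply: incidence_act. Qed.

Lemma incidence_le F v : incidence F v <= #|G|.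
Proof. by rewrite -sum1_card; apply: leq_sum => a _; apply: leq_b1. Qed.

Lemma incidence_gt0 F v : 0 < incidence F v -> exists2 u, u \in F & v \in orbit to G u.
Proof.
rewrite lt0n sum_nat_eq0 negb_forall => /existsP [a]; rewrite negb_imply eqb0 negbK.
by case/andP=> aG; rewrite setactE => /imsetP [u uF ->]; exists u; rewrite ?mem_orbit.
Qed.

Lemma sum_load (S : {set T}) Fs :
  \sum_(v in S) load Fs v = \sum_(F <- Fs) \sum_(a in G) #|S :&: to^* F a|.
Proof.
rewrite exchange_big /=; apply: eq_bigr => F _.
by rewrite exchange_big /=; apply: eq_bigr => a _; rewrite sum_mem_card.
Qed.

Lemma translate_in_M F a : F \in M -> a \in G -> to^* F a \in M.
Proof. by move=> FM aG; rewrite (astabs_act _ (subsetP M_stable a aG)). Qed.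

Lemma packing_size Fs : packing Fs -> size Fs * #|G| <= #|X| * N.
Proof.
case/andP=> /allP FsM /forallP loadN.
apply: (@leq_trans (\sum_(x in X) load Fs x)); last first.
  by rewrite -sum_nat_const; apply: leq_sum => x _; apply: loadN.
rewrite sum_load -sum1_size big_distrl /= !big_seq; apply: leq_sum => F /FsM FM.
rewrite mul1n -sum1_card; apply: leq_sum => a aG.
by rewrite card_gt0; apply: M_meets_X; apply: translate_in_M.
Qed.

Lemma packing_nil : packing [::].
Proof. by apply/andP; split=> //; apply/forallP => v; rewrite /load big_nil. Qed.

Lemma packing_length Fs : packing Fs -> size Fs <= #|X| * N.
Proof. by move/packing_size; apply: leq_trans; rewrite leq_pmulr ?cardG_gt0. Qed.

Lemma maximal_packing_exists : exists Fs, maximal_packing Fs.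
Proof.
suff grow n Fs : packing Fs -> #|X| * N - size Fs < n -> exists Fs, maximal_packing Fs.
  by apply: (grow _ _ packing_nil (ltnSn _)).
elim: n Fs => // n IHn Fs pFs slack.
have [maxFs|] := boolP [forall F in M, ~~ packing (F :: Fs)].
  by exists Fs; apply/andP.
rewrite negb_forall_in => /exists_inP [F _ /negPn pFFs].
by apply: (IHn _ pFFs); move: (packing_length pFFs) slack; rewrite /=; clear; lia.
Qed.

Section Heavy.

Variable Fs : seq {set T}.
Hypothesis maxFs : maximal_packing Fs.

Definition heavy := [set v | N < load Fs v + #|G|].

Lemma heavy_stable : G \subset 'N(heavy | to)%g.
Proof. by apply/subsetP => a aG; apply/astabsP => v; rewrite !inE load_act. Qed.

Lemma heavy_meets B : B \in M -> B :&: heavy != set0.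
Proof.
case/andP: maxFs => /andP [FsM /forallP loadN] /forall_inP maxF BM.
have [w NltBw]: exists w, N < load (B :: Fs) w.
  move: (maxF B BM); rewrite /packing /= BM FsM /= negb_forall => /existsP [w].
  by rewrite -ltnNge; exists w.
rewrite load_cons in NltBw.
have /incidence_gt0 [u uB] : 0 < incidence B w by have := loadN w; lia.
case/orbitP=> a aG wE; apply/set0Pn; exists u; rewrite !inE uB -(load_act _ _ aG) wE.
by have := incidence_le B w; lia.
Qed.

Lemma heavy_card : #|heavy| <= #|X| * d.
Proof.
case/andP: maxFs => pFs _; have FsM := allP (andP pFs).1.
have lower : #|heavy| * (#|X| * d * #|G|).+1 <= \sum_(v in heavy) load Fs v.
  by rewrite -sum_nat_const; apply: leq_sum => v; rewrite inE /capacity; lia.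
have upper : \sum_(v in heavy) load Fs v <= size Fs * #|G| * d.
  rewrite sum_load -sum1_size !big_distrl /= !big_seq; apply: leq_sum => F /FsM FM.
  rewrite mul1n -sum_nat_const; apply: leq_sum => a aG.
  by rewrite (leq_trans (subset_leq_card (subsetIr _ _))) // M_small ?translate_in_M.
apply: (@leq_of_mul_capacity _ _ #|G|); apply: leq_trans (leq_trans lower upper) _.
by rewrite [X in _ <= X]mulnAC; apply: leq_mul (packing_size pFs) (leqnn d).
Qed.

End Heavy.

Theorem invariant_hitting_set :
  exists Y : {set T}, [/\ G \subset 'N(Y | to)%g, {in M, forall B : {set T}, B :&: Y != set0}
                        & #|Y| <= #|X| * d].
Proof.
have [Fs maxFs] := maximal_packing_exists.
by exists (heavy Fs); split; [apply: heavy_stable | apply: heavy_meets | apply: heavy_card].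
Qed.

End InvariantHittingSet.

(** * Minimal forced sets of a hypergraph *)

Section Hypergraph.

Variables (V : choiceType) (E : seq V -> Prop).

Definition hitting (Y : seq V) := forall l, E l -> exists2 v, v \in l & v \in Y.

Definition forced (A : seq V) := forall Y, hitting Y -> exists2 v, v \in A & v \in Y.

Definition minimal_forced (A : seq V) :=
  forced A /\ forall B, {subset B <= A} -> forced B -> {subset A <= B}.

Definition symmetry (f : V -> V) := bijective f /\ forall l, E (map f l) <-> E l.

Lemma forced_sub A B : {subset A <= B} -> forced A -> forced B.
Proof. by move=> AB fA Y /fA [v /AB vB vY]; exists v. Qed.

Lemma edge_forced l : E l -> forced l.
Proof. by move=> El Y; apply. Qed.

Lemma not_forced A : ~ forced A -> exists2 Y, hitting Y & forall v, v \in A -> v \notin Y.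
Proof.
move=> nfA; apply: contrapT => noY; apply: nfA => Y hY; apply: contrapT => AY.
by apply: noY; exists Y => // v vA; apply/negP => vY; apply: AY; exists v.
Qed.

Lemma forced_shrink A B a : {subset B <= A} -> forced B -> a \in A -> a \notin B ->
  exists B', [/\ forced B', {subset B' <= A} & size B' < size A].
Proof.
move=> BA fB aA aB; exists [seq x <- A | x \in B]; split.
- by apply: forced_sub fB => x xB; rewrite mem_filter xB BA.
- by move=> x; rewrite mem_filter => /andP [].
rewrite size_filter -(count_predC (mem B) A) -{1}[count _ A]addn0 ltn_add2l -has_count.
by apply/hasP; exists a.
Qed.

Lemma minimal_forced_sub A : forced A ->
  exists F, [/\ minimal_forced F, {subset F <= A} & size F <= size A].
Proof.
have [n] := ubnP (size A); elim: n A => // n IHn A /ltnSE szA fA.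
have [[B [BA fB [a aA aB]]]|noB] :=
  pselect (exists B, [/\ {subset B <= A}, forced B & exists2 a, a \in A & a \notin B]).
  have [B' [fB' B'A szB']] := forced_shrink BA fB aA aB.
  have [F [mF FB' szF]] := IHn B' (leq_trans szB' szA) fB'.
  by exists F; split=> // [x /FB' /B'A | ]; last exact: leq_trans szF (ltnW szB').
exists A; split=> //; split=> // B BA fB x xA; apply/negPn/negP => xB.
by apply: noB; exists B; split=> //; exists x.
Qed.

Lemma minimal_forced_extend A Y F :
  uniq A -> hitting Y -> (forall v, v \in A -> v \notin Y) ->
  minimal_forced F -> {subset A <= F} ->
  exists t, [/\ t \in Y, uniq (t :: A) & {subset t :: A <= F}].
Proof.
move=> uA hY AY [fF _] AF; have [t tF tY] := fF Y hY.
exists t; split=> //=; first by rewrite uA andbT; apply: contraL tY; apply: AY.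
by move=> x; rewrite inE => /predU1P [->|/AF].
Qed.

Lemma minimal_forced_finite j A : uniq A -> exists W : seq V,
  forall F, minimal_forced F -> {subset A <= F} -> size F <= size A + j -> {subset F <= W}.
Proof.
elim: j A => [|j IHj] A uA; have [fA|/not_forced [Y hY AY]] := pselect (forced A);
  try by exists A => F [_ minF] AF _; apply: minF.
  exists [::] => F mF AF szF; have [t [_ utA tAF]] := minimal_forced_extend uA hY AY mF AF.
  by have := leq_trans (uniq_leq_size utA tAF) szF; rewrite addn0 ltnn.
have /choice [W hW] : forall t, exists W : seq V, uniq (t :: A) ->
    forall F, minimal_forced F -> {subset t :: A <= F} -> size F <= size (t :: A) + j ->
    {subset F <= W}.
  by move=> t; case: (boolP (uniq (t :: A))) => [/IHj [W hW]|_]; [exists W | exists [::]].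
exists (flatten [seq W t | t <- Y]) => F mF AF szF x xF.
have [t [tY utA tAF]] := minimal_forced_extend uA hY AY mF AF.
apply/flatten_mapP; exists t => //; apply: (hW t utA F mF tAF) xF.
by rewrite /= addSn -addnS.
Qed.

Section Symmetry.

Variables (f g : V -> V).
Hypotheses (f_sym : symmetry f) (fK : cancel f g) (gK : cancel g f).

Lemma symmetry_inv : symmetry g.
Proof.
split; first by exists f.
by move=> l; rewrite -(proj2 f_sym) -map_comp (eq_map gK) map_id.
Qed.

Lemma hitting_map Y : hitting Y -> hitting (map g Y).
Proof.
move=> hY l El; have [_ /(_ l)/proj2/(_ El)/hY [_ /mapP [u ul ->] fuY]] := f_sym.
by exists u => //; apply/mapP; exists (f u).
Qed.

Lemma forced_map A : forced A -> forced (map f A).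
Proof.
move=> fA Y /hitting_map /fA [v vA /mapP [y yY vE]].
by exists y => //; apply/mapP; exists v; rewrite // vE gK.
Qed.

End Symmetry.

Lemma minimal_forced_map f A : symmetry f -> minimal_forced A -> minimal_forced (map f A).
Proof.
move=> f_sym [fA minA]; have [[g fK gK] _] := f_sym.
split=> [|B BfA fB _ /mapP [a aA ->]]; first exact: (forced_map f_sym fK gK fA).
have gBA : {subset map g B <= A}.
  by move=> _ /mapP [b /BfA /mapP [y yA ->] ->]; rewrite fK.
have g_sym := symmetry_inv f_sym fK gK.
have /mapP [b bB ->] := minA _ gBA (forced_map g_sym gK fK fB) a aA.
by rewrite gK.
Qed.

Section FiniteModel.

Variables (d : nat) (W : seq V).
Hypothesis W_covers : forall F, minimal_forced F -> size F <= d -> {subset F <= W}.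

Definition core_point v := `[< exists F, [/\ minimal_forced F, size F <= d & v \in F] >].

(* Filtering out the points of [W] that lie in no small minimal forced set makes [core]
   stable under symmetries. *)
Definition core := [seq v <- W | core_point v].

Lemma mem_core v : (v \in core) = core_point v.
Proof.
by rewrite mem_filter andb_idr // => /asboolP [F [mF szF vF]]; apply: W_covers mF szF v vF.
Qed.

Lemma minimal_forced_core A : minimal_forced A -> size A <= d -> {subset A <= core}.
Proof. by move=> mA szA v vA; rewrite mem_core; apply/asboolP; exists A. Qed.

Lemma mem_core_map f v : symmetry f -> (f v \in core) = (v \in core).
Proof.
suff core_map h w : symmetry h -> w \in core -> h w \in core.
  move=> f_sym; have [[g fK gK] _] := f_sym; apply/idP/idP; last exact: core_map.
  by rewrite -{2}(fK v); apply: core_map; apply: symmetry_inv gK.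
move=> h_sym; rewrite mem_core => /asboolP [F [mF szF wF]].
by apply: minimal_forced_core (map_f h wF); rewrite ?size_map //; apply: minimal_forced_map.
Qed.

Local Notation T := (seq_sub core).

Definition trace (A : seq V) : {set T} := [set x | val x \in A].

Definition core_family : {set {set T}} :=
  [set B | `[< exists A, [/\ minimal_forced A, size A <= d & B = trace A] >]].

Lemma card_trace A : #|trace A| <= size A.
Proof.
rewrite cardE -(size_map val); apply: uniq_leq_size.
  by rewrite map_inj_uniq ?enum_uniq //; apply: val_inj.
by move=> y /mapP [x]; rewrite mem_enum inE => xA ->.
Qed.

Lemma trace_meets A Y : minimal_forced A -> size A <= d -> hitting Y ->
  trace Y :&: trace A != set0.
Proof.
move=> mA szA hY; have [fA _] := mA; have [v vA vY] := fA Y hY; apply/set0Pn.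
by exists (SeqSub (minimal_forced_core mA szA vA)); rewrite !inE vA vY.
Qed.

Section Lift.

Variables (f : V -> V) (f_sym : symmetry f).

(* The default [x] is never used, since [f] maps [core] into itself (see [val_lift]). *)
Definition lift (x : T) : T := insubd x (f (val x)).

Lemma val_lift x : val (lift x) = f (val x).
Proof. by rewrite insubdK // -topredE /= mem_core_map // (valP x). Qed.

Lemma lift_inj : injective lift.
Proof.
have [[g fK _] _] := f_sym.
by move=> x y /(congr1 val); rewrite !val_lift => /(can_inj fK) /val_inj.
Qed.

Definition lift_perm := perm lift_inj.

Lemma val_lift_perm x : val (lift_perm x) = f (val x).
Proof. by rewrite permE val_lift. Qed.

Lemma trace_map A : {subset A <= core} -> ('P^* (trace A) lift_perm)%act = trace (map f A).
Proof.
move=> Acore; apply/setP => y; rewrite /= setactE inE; apply/imsetP/mapP.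
  by case=> x; rewrite inE => xA ->; exists (val x); rewrite //= apermE val_lift_perm.
case=> a aA yE; exists (SeqSub (Acore a aA)); rewrite ?inE //.
by apply: val_inj; rewrite /= apermE val_lift_perm.
Qed.

Lemma lift_perm_stable : lift_perm \in 'N(core_family | 'P^*)%g.
Proof.
rewrite inE in_setT inE; apply/subsetP => _ /[!inE] /asboolP [A [mA szA ->]].
rewrite trace_map; last exact: minimal_forced_core.
apply/asboolP.
by exists (map f A); rewrite size_map; split=> //; apply: minimal_forced_map.
Qed.

End Lift.

Hypothesis E_small : forall l, E l -> size l <= d.

Lemma mem_image_val (Z : {set T}) (x : T) : (val x \in [seq val y | y in Z]) = (x \in Z).
Proof. by rewrite mem_image //; apply: val_inj. Qed.

Lemma image_val_core (Z : {set T}) v : v \in [seq val y | y in Z] -> v \in core.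
Proof. by case/imageP=> x _ ->; apply: valP. Qed.

Theorem core_invariant_hitting X : hitting X ->
  exists Y, [/\ uniq Y, forall f, symmetry f -> forall v, (f v \in Y) = (v \in Y),
                hitting Y & size Y <= size X * d].
Proof.
move=> hX; pose G := 'N(core_family | 'P^*)%G.
have M_small : {in core_family, forall B : {set T}, #|B| <= d}.
  by move=> _ /[!inE] /asboolP [A [_ szA ->]]; apply: leq_trans (card_trace A) szA.
have M_meets : {in core_family, forall B : {set T}, trace X :&: B != set0}.
  by move=> _ /[!inE] /asboolP [A [mA szA ->]]; apply: trace_meets.
have [Z [Zstable Zmeets Zcard]] := invariant_hitting_set (subxx G) M_small M_meets.
exists [seq val x | x in Z]; split.
- by rewrite map_inj_uniq ?enum_uniq //; apply: val_inj.
- move=> f f_sym v; have [vcore|vNcore] := boolP (v \in core); last first.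
    by rewrite !(contraNF (@image_val_core Z _)) ?mem_core_map.
  rewrite -[v]/(val (SeqSub vcore)) -val_lift_perm // !mem_image_val.
  rewrite -[lift_perm _ _]apermE; apply: astabs_act.
  by apply: (subsetP Zstable); apply: lift_perm_stable.
- move=> l El; have [F [mF Fl szF]] := minimal_forced_sub (edge_forced El).
  have: trace F \in core_family.
    by rewrite inE; apply/asboolP; exists F; split=> //; apply: leq_trans szF (E_small El).
  case/Zmeets/set0Pn=> x /setIP [xF xZ]; exists (val x); last by rewrite mem_image_val.
  by apply: Fl; rewrite inE in xF.
- by rewrite size_image; apply: leq_trans Zcard (leq_mul (card_trace X) (leqnn d)).
Qed.

End FiniteModel.

Theorem invariant_hitting d : (forall l, E l -> size l <= d) -> forall X, hitting X ->
  exists Y, [/\ uniq Y, forall f, symmetry f -> forall v, (f v \in Y) = (v \in Y),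
                hitting Y & size Y <= size X * d].
Proof.
have [W W_covers] := minimal_forced_finite d (isT : uniq [::]).
by apply: (core_invariant_hitting (W := W)) => F mF; apply: W_covers.
Qed.

End Hypergraph.

(** * Copies of finite graphs *)

Lemma InP (T : eqType) (x : T) (s : seq T) : reflect (List.In x s) (x \in s).
Proof.
elim: s => [|y s IHs] /=; first by right.
rewrite inE; apply: (iffP predU1P) => [[->|/IHs]|[->|/IHs]]; by [left | right].
Qed.

Lemma uniq_NoDup (T : eqType) (s : seq T) : uniq s -> List.NoDup s.
Proof.
elim: s => [|x s IHs] /=; first by constructor.
by case/andP=> /InP xs us; constructor; last exact: IHs.
Qed.

Lemma In_invariant (T : eqType) (Y : seq T) (f : T -> T) :
  (forall v, (f v \in Y) = (v \in Y)) -> forall v, List.In (f v) Y <-> List.In v Y.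
Proof. by move=> fY v; split=> /InP h; apply/InP; [rewrite -fY | rewrite fY]. Qed.

Lemma leq_bigmax_In (I : Type) (F : I -> nat) (r : seq I) i :
  List.In i r -> F i <= \max_(j <- r) F j.
Proof.
elim: r => //= j r IHr; rewrite big_cons => [[->|/IHr]]; first exact: leq_maxl.
by move/leq_trans; apply; apply: leq_maxr.
Qed.

Lemma range_seq (I : finType) (T : eqType) (f : I -> T) (P : T -> Prop) :
  injective f -> (forall y, P y <-> exists x, f x = y) ->
  exists s : seq T, [/\ uniq s, size s = #|I| & forall y, P y <-> y \in s].
Proof.
move=> f_inj Pf; exists [seq f x | x in I]; split; rewrite ?size_image //.
  by rewrite map_inj_uniq ?enum_uniq.
by move=> y; rewrite Pf; split=> [[x <-]|/imageP [x _ ->]]; [rewrite mem_image | exists x].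
Qed.

Definition img (A B : Type) (f : A -> B) (P : A -> Prop) b := exists2 a, P a & f a = b.

Lemma img_mem (A B : eqType) (f : A -> B) (P : A -> Prop) (s : seq A) :
  (forall a, P a <-> a \in s) -> forall b, img f P b <-> b \in map f s.
Proof.
move=> Ps b; split=> [[a /Ps sa <-]|/mapP [a sa ->]]; first exact: map_f.
by exists a; rewrite ?Ps.
Qed.

Section Copies.

Variables (G : graph) (Ks : seq fin_graph).

Definition copy (VS : gV G -> Prop) (ES : gE G -> Prop) :=
  exists2 K, List.In K Ks & is_subgraph VS ES /\ iso_to VS ES K.

Lemma automorphism_copy s t VS ES : automorphism s t -> copy VS ES -> copy (img s VS) (img t ES).
Proof.
move=> [[s' sK _] [[t' tK _] st]] [K inK [sub [phi [psi [phi_inj [psi_inj [VSphi [ESpsi inc]]]]]]]].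
exists K => //; split.
  move=> _ [e ESe <-]; have [se te] := st e; have [VSs VSt] := sub e ESe.
  by rewrite se te; split; [exists (gsrc e) | exists (gtgt e)].
exists (s \o phi), (t \o psi); split; [exact: inj_comp (can_inj sK) phi_inj|].
split; [exact: inj_comp (can_inj tK) psi_inj|].
split; [move=> v|split; [move=> e|move=> y]].
- split=> [[u /VSphi [x <-] <-]|[x <-]]; first by exists x.
  by exists (phi x) => //; apply/VSphi; exists x.
- split=> [[u /ESpsi [y <-] <-]|[y <-]]; first by exists y.
  by exists (psi y) => //; apply/ESpsi; exists y.
- by have [se te] := st (psi y); have [ps pt] := inc y; rewrite /= se te ps pt.
Qed.

Lemma automorphism_inv (s : gV G -> gV G) (t : gE G -> gE G) : automorphism s t ->
  exists s' t', [/\ automorphism s' t', cancel s s' & cancel t t'].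
Proof.
move=> [[s' sK Ks'] [[t' tK Kt'] st]]; exists s', t'; split=> //.
split; [by exists s | split; [by exists t |]] => e.
have [se te] := st (t' e); rewrite Kt' in se te.
by rewrite se te !sK.
Qed.

(* [gV G] and [gE G] carry no decidable equality; [{classic _}] supplies one. *)
Lemma copy_vertex_seq VS ES : copy VS ES ->
  exists l : seq {classic gV G}, [/\ uniq l, size l <= \max_(K <- Ks) #|fV K| &
                                     forall v, VS v <-> v \in l].
Proof.
move=> [K inK [_ [phi [_ [phi_inj [_ [VSphi _]]]]]]].
have [l [ul szl VSl]] := range_seq (T := {classic gV G}) phi_inj VSphi.
by exists l; rewrite szl; split=> //; apply: leq_bigmax_In.
Qed.

Lemma copy_edge_seq VS ES : copy VS ES ->
  exists l : seq {classic gE G}, [/\ uniq l, size l <= \max_(K <- Ks) #|fE K| &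
                                     forall e, ES e <-> e \in l].
Proof.
move=> [K inK [_ [_ [psi [_ [psi_inj [_ [ESpsi _]]]]]]]].
have [l [ul szl ESl]] := range_seq (T := {classic gE G}) psi_inj ESpsi.
by exists l; rewrite szl; split=> //; apply: leq_bigmax_In.
Qed.

Definition vertex_copy (l : seq {classic gV G}) :=
  uniq l /\ exists VS ES, copy VS ES /\ forall v, VS v <-> v \in l.

Definition edge_copy (l : seq {classic gE G}) :=
  uniq l /\ exists VS ES, copy VS ES /\ forall e, ES e <-> e \in l.

Lemma vertex_copy_size l : vertex_copy l -> size l <= \max_(K <- Ks) #|fV K|.
Proof.
move=> [ul [VS [ES [cp VSl]]]]; have [l' [ul' szl' VSl']] := copy_vertex_seq cp.
rewrite (perm_size (uniq_perm ul ul' _)) // => v.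
by apply/idP/idP => [/VSl/VSl'|/VSl'/VSl].
Qed.

Lemma edge_copy_size l : edge_copy l -> size l <= \max_(K <- Ks) #|fE K|.
Proof.
move=> [ul [VS [ES [cp ESl]]]]; have [l' [ul' szl' ESl']] := copy_edge_seq cp.
rewrite (perm_size (uniq_perm ul ul' _)) // => e.
by apply/idP/idP => [/ESl/ESl'|/ESl'/ESl].
Qed.

Lemma vertex_copy_map (s : {classic gV G} -> {classic gV G}) t l :
  automorphism s t -> vertex_copy l -> vertex_copy (map s l).
Proof.
move=> st [ul [VS [ES [cp VSl]]]]; split.
  by rewrite map_inj_uniq //; case: st => [[s' sK _] _]; apply: can_inj sK.
exists (img s VS), (img t ES).
by split; [exact: automorphism_copy st cp | exact: (img_mem s VSl)].
Qed.

Lemma edge_copy_map s (t : {classic gE G} -> {classic gE G}) l :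
  automorphism s t -> edge_copy l -> edge_copy (map t l).
Proof.
move=> st [ul [VS [ES [cp ESl]]]]; split.
  by rewrite map_inj_uniq //; case: st => [_ [[t' tK _] _]]; apply: can_inj tK.
exists (img s VS), (img t ES).
by split; [exact: automorphism_copy st cp | exact: (img_mem t ESl)].
Qed.

Lemma vertex_copy_symmetry s t : automorphism s t -> symmetry vertex_copy s.
Proof.
move=> st; have [s' [t' [st' sK _]]] := automorphism_inv st.
split=> [|l]; first by case: st.
split; last exact: vertex_copy_map st.
by move/(vertex_copy_map st'); rewrite -map_comp (eq_map sK) map_id.
Qed.

Lemma edge_copy_symmetry s t : automorphism s t -> symmetry edge_copy t.
Proof.
move=> st; have [s' [t' [st' _ tK]]] := automorphism_inv st.
split=> [|l]; first by case: st => _ [].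
split; last exact: edge_copy_map st.
by move/(edge_copy_map st'); rewrite -map_comp (eq_map tK) map_id.
Qed.

Lemma vhits_hitting X : vhits Ks X -> hitting vertex_copy X.
Proof.
move=> hX l [_ [VS [ES [[K inK [sub iso]] VSl]]]].
by have [v [VSv Xv]] := hX K VS ES inK sub iso; exists v; [apply/VSl | apply/InP].
Qed.

Lemma ehits_hitting X : ehits Ks X -> hitting edge_copy X.
Proof.
move=> hX l [_ [VS [ES [[K inK [sub iso]] ESl]]]].
by have [e [ESe Xe]] := hX K VS ES inK sub iso; exists e; [apply/ESl | apply/InP].
Qed.

Lemma hitting_vhits Y : hitting vertex_copy Y -> vhits Ks Y.
Proof.
move=> hY K VS ES inK sub iso; have cp : copy VS ES by exists K.
have [l [ul _ VSl]] := copy_vertex_seq cp.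
have [|v vl vY] := hY l; first by split=> //; exists VS, ES.
by exists v; split; [apply/VSl | apply/(@InP {classic gV G})].
Qed.

Lemma hitting_ehits Y : hitting edge_copy Y -> ehits Ks Y.
Proof.
move=> hY K VS ES inK sub iso; have cp : copy VS ES by exists K.
have [l [ul _ ESl]] := copy_edge_seq cp.
have [|e el eY] := hY l; first by split=> //; exists VS, ES.
by exists e; split; [apply/ESl | apply/(@InP {classic gE G})].
Qed.

End Copies.

Theorem mainTheorem3 (G : graph) (Ks : list fin_graph) :
  (forall X : list (gV G), List.NoDup X -> vhits Ks X ->
     exists Y : list (gV G), List.NoDup Y /\ vinvariant Y /\ vhits Ks Y /\
       (size Y <= size X * \max_(K <- Ks) #|fV K|)%N)
  /\
  (forall X : list (gE G), List.NoDup X -> ehits Ks X ->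
     exists Y : list (gE G), List.NoDup Y /\ einvariant Y /\ ehits Ks Y /\
       (size Y <= size X * \max_(K <- Ks) #|fE K|)%N).
Proof.
split=> X _ hitX.
- have [Y [uY symY hitY szY]] :=
    invariant_hitting (@vertex_copy_size G Ks) (vhits_hitting hitX).
  exists Y; split; first exact: (@uniq_NoDup {classic gV G} _ uY).
  split; last by split; [exact: hitting_vhits hitY | exact: szY].
  move=> s t st; apply: (@In_invariant {classic gV G}).
  by apply: symY; apply: vertex_copy_symmetry st.
- have [Y [uY symY hitY szY]] :=
    invariant_hitting (@edge_copy_size G Ks) (ehits_hitting hitX).
  exists Y; split; first exact: (@uniq_NoDup {classic gE G} _ uY).
  split; last by split; [exact: hitting_ehits hitY | exact: szY].
  move=> s t st; apply: (@In_invariant {classic gE G}).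
  by apply: symY; apply: edge_copy_symmetry st.
Qed.
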